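(* Let $V$ be a vector space over a field $\mathbb{K}$ of characteristic $0$, let $F$ be a bilinear form on $V$, and set $a_F=a_1^F$. Then $\lambda_F=\exp(a_F)=\sum_{n\ge0}\frac{1}{n!}a_F^n$, where the series is finite when applied to any element of $\mathcal{T}(V)$.
   Context: $\mathcal{T}(V)$ is the tensor algebra of $V$. $a_1^F$ is the linear map on $\mathcal{T}(V)$ with $a_1^F(x_1\otimes\cdots\otimes x_p)=0$ for $p<2$ and $a_1^F(x_1\otimes\cdots\otimes x_p)=\sum_{1\le i<j\le p}(-1)^{i+j-1}F(x_i,x_j)\,x_1\otimes\cdots\widehat{x_i}\cdots\widehat{x_j}\cdots\otimes x_p$ for $p\ge2$. For $f\in V^*$, $i_f$ is the unique linear map on $\mathcal{T}(V)$ with $i_f(1)=0$ and $i_f(x\otimes u)=f(x)u-x\otimes i_f(u)$ ($x\in V$); $i_x^F:=i_{f_x}$ with $f_x(y)=F(x,y)$. $\Lambda_F:\mathcal{T}(V)\to\mathrm{End}(\mathcal{T}(V))$ is the unique unital algebra homomorphism with $\Lambda_F(x)(u)=x\otimes u+i_x^F(u)$ for $x\in V$, and $\lambda_F(u):=\Lambda_F(u)(1)$. *)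

From HB Require Import structures.
From mathcomp Require Import all_boot all_order all_algebra.
Set Implicit Arguments.
Unset Strict Implicit.
Unset Printing Implicit Defensive.
Import Order.TTheory GRing.Theory Num.Theory.
Local Open Scope ring_scope.

Definition lin (K : fieldType) (U W : lmodType K) (f : U -> W) : Prop :=
  forall (k : K) (x y : U), f (k *: x + y) = k *: f x + f y.

Definition alg_hom_ext (K : fieldType) (V : lmodType K) (T A : algType K)
    (iota : V -> T) (f : V -> A) (g : T -> A) : Prop :=
  [/\ lin g, g 1 = 1, (forall u v, g (u * v) = g u * g v)
    & (forall x, g (iota x) = f x)].

Definition is_tensor_algebra (K : fieldType) (V : lmodType K) (T : algType K)
    (iota : V -> T) : Prop :=
  lin iota /\
  forall (A : algType K) (f : V -> A), lin f ->
    (exists g : T -> A, alg_hom_ext iota f g) /\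
    (forall g1 g2 : T -> A, alg_hom_ext iota f g1 -> alg_hom_ext iota f g2 ->
       g1 =1 g2).

Definition pure (K : fieldType) (V : lmodType K) (T : algType K)
    (iota : V -> T) (xs : seq V) : T :=
  \prod_(x <- xs) iota x.

Definition rem2 (K : fieldType) (V : lmodType K) (xs : seq V) (i j : nat)
  : seq V :=
  [seq nth 0 xs k | k <- iota 0 (size xs) & (k != i) && (k != j)].

(* defining property of a_1^F (indices 0-based: (-1)^(i+j-1) with 1-based
   indices equals (-1)^(i+j+1) with 0-based ones); for p < 2 the sum is empty *)
Definition is_a1F (K : fieldType) (V : lmodType K) (T : algType K)
    (iota : V -> T) (F : V -> V -> K) (a : T -> T) : Prop :=
  lin a /\
  forall xs : seq V,
    a (pure iota xs) =
    \sum_(j < size xs) \sum_(i < j)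
       ((-1) ^+ (i + j + 1) * F (nth 0 xs i) (nth 0 xs j))
         *: pure iota (rem2 xs i j).

(* defining property of the family i^F_x = i_{f_x}, f_x = F(x, .) *)
Definition is_iF (K : fieldType) (V : lmodType K) (T : algType K)
    (iota : V -> T) (F : V -> V -> K) (ix : V -> T -> T) : Prop :=
  forall x : V,
    [/\ lin (ix x), ix x 1 = 0
      & forall (y : V) (u : T), ix x (iota y * u) = F x y *: u - iota y * ix x u].

Definition is_LambdaF (K : fieldType) (V : lmodType K) (T : algType K)
    (iota : V -> T) (ix : V -> T -> T) (L : T -> T -> T) : Prop :=
  [/\ forall u, lin (L u),
      forall (k : K) (u v w : T), L (k *: u + v) w = k *: L u w + L v w,
      forall w, L 1 w = w,
      forall u v w, L (u * v) w = L u (L v w)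
    & forall (x : V) (w : T), L (iota x) w = iota x * w + ix x w].

Definition bilinear_form (K : fieldType) (V : lmodType K) (F : V -> V -> K)
  : Prop :=
  forall (k : K) (x y z : V),
    F (k *: x + y) z = k * F x z + F y z /\
    F z (k *: x + y) = k * F z x + F z y.

From HB Require Import structures.
From mathcomp Require Import all_boot all_order all_algebra.
From mathcomp Require Import boolp.
Set Implicit Arguments.
Unset Strict Implicit.
Unset Printing Implicit Defensive.
Import Order.TTheory GRing.Theory Num.Theory.
Local Open Scope ring_scope.

(* The pure tensors span T(V): their span is a subalgebra containing V, so by
   the uniqueness part of the universal property its inclusion is onto.
   On pure tensors the defining formula of a = a_1^F unfolds to
   a (x u) = x a(u) + i_x(u); the i_x anticommute, hence commute with a, and
   a^(n+1)(x u) = x a^(n+1)(u) + (n+1) i_x(a^n u).  Thus a^(p+1) kills words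
   of length p, and exp(a)(x u) = x exp(a)(u) + i_x(exp(a)(u)), which is the
   recursion Lambda_F(x u)(1) = x Lambda_F(u)(1) + i_x(Lambda_F(u)(1)). *)

Section LinearFacts.
Variables (K : fieldType) (U W : lmodType K) (f : U -> W).
Hypothesis lin_f : lin f.
#[local] HB.instance Definition _ := GRing.isLinear.Build K U W *:%R f lin_f.

Lemma lin0 : f 0 = 0. Proof. exact: linear0. Qed.
Lemma linD u v : f (u + v) = f u + f v. Proof. exact: linearD. Qed.
Lemma linZ k u : f (k *: u) = k *: f u. Proof. exact: linearZ. Qed.
Lemma linB u v : f (u - v) = f u - f v. Proof. exact: linearB. Qed.
Lemma lin_sum I (r : seq I) (P : pred I) (G : I -> U) :
  f (\sum_(i <- r | P i) G i) = \sum_(i <- r | P i) f (G i).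
Proof. exact: linear_sum. Qed.

End LinearFacts.

Section PureSpan.
Variables (K : fieldType) (V : lmodType K) (T : algType K) (io : V -> T).

Definition pure_span : {pred T} := fun u =>
  `[< exists s : seq (K * seq V), u = \sum_(p <- s) p.1 *: pure io p.2 >].

Lemma pure_span_subalg_closed : subalg_closed pure_span.
Proof.
split.
- by apply/asboolP; exists [:: (1, [::])]; rewrite big_seq1 /pure big_nil scale1r.
- move=> k u v /asboolP[s1 ->] /asboolP[s2 ->]; apply/asboolP.
  exists ([seq (k * p.1, p.2) | p <- s1] ++ s2).
  rewrite big_cat big_map /= scaler_sumr; congr (_ + _).
  by apply: eq_bigr => p _; rewrite scalerA.
- move=> u v /asboolP[s1 ->] /asboolP[s2 ->]; apply/asboolP.
  exists [seq (p.1 * q.1, p.2 ++ q.2) | p <- s1, q <- s2].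
  rewrite big_allpairs_dep mulr_suml; apply: eq_bigr => p _.
  rewrite mulr_sumr; apply: eq_bigr => q _ /=.
  by rewrite /pure big_cat -scalerAl -scalerAr scalerA.
Qed.

HB.instance Definition _ := GRing.isSubalgClosed.Build K T pure_span
  (GRing.subalg_closed_semi pure_span_subalg_closed).

Record pure_spanT :=
  PureSpanT { pure_span_val : T; _ : pure_span_val \in pure_span }.
HB.instance Definition _ := [isSub for pure_span_val].
HB.instance Definition _ := [Choice of pure_spanT by <:].
HB.instance Definition _ := [SubChoice_isSubAlgebra of pure_spanT by <:].

Lemma tensor_algebra_pure_span :
  is_tensor_algebra io -> forall u, u \in pure_span.
Proof.
move=> [lin_io univ] u.
have io_span x : io x \in pure_span.
  by apply/asboolP; exists [:: (1, [:: x])]; rewrite /pure !big_seq1 scale1r.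
pose f x : pure_spanT := @PureSpanT (io x) (io_span x).
have lin_f : lin f by move=> k x y; apply: val_inj; rewrite /= lin_io.
have [[g [lin_g g1 gM g_io]] _] := univ _ f lin_f.
have [_ uniqT] := univ T io lin_io.
have val_g : (fun w => pure_span_val (g w)) =1 id.
  by apply: uniqT; split=> [k x y||x y|x] /=; rewrite ?lin_g ?g1 ?gM ?g_io.
by rewrite -(val_g u); case: (g u).
Qed.

Lemma tensor_ind (P : T -> Prop) : is_tensor_algebra io ->
  (forall ws, P (pure io ws)) ->
  (forall k u v, P u -> P v -> P (k *: u + v)) ->
  forall u, P u.
Proof.
move=> tens P_pure P_comb u.
have /asboolP[s ->] := tensor_algebra_pure_span tens u.
elim: s => [|p s IH]; last by rewrite big_cons; apply: P_comb.
have := P_comb (-1) _ _ (P_pure [::]) (P_pure [::]).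
by rewrite big_nil scaleN1r addNr.
Qed.

Lemma lin_ext (W : lmodType K) (f g : T -> W) : is_tensor_algebra io ->
  lin f -> lin g -> (forall ws, f (pure io ws) = g (pure io ws)) -> f =1 g.
Proof.
move=> tens lin_f lin_g fg; apply: tensor_ind => // k u v fgu fgv.
by rewrite lin_f lin_g fgu fgv.
Qed.

End PureSpan.

Lemma nth_filter_iota_cons (X : Type) (x0 y : X) (ys : seq X) (P : pred nat) :
  [seq nth x0 (y :: ys) k | k <- iota 0 (size ys).+1 & P k] =
  (if P 0%N then [:: y] else [::]) ++
  [seq nth x0 ys k | k <- iota 0 (size ys) & P k.+1].
Proof.
rewrite /= -[1%N]/(1 + 0)%N iotaDl filter_map.
by case: (P 0%N); rewrite /= -map_comp.
Qed.

Section Rem2.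
Variables (K : fieldType) (V : lmodType K).
Implicit Types (y : V) (ys : seq V).

Lemma rem2_cons00 y ys : rem2 (y :: ys) 0 0 = ys.
Proof.
rewrite /rem2 nth_filter_iota_cons (eq_filter (a2 := predT)) // filter_predT.
by rewrite -[RHS](mkseq_nth 0).
Qed.

Lemma rem2_cons0S y ys j : rem2 (y :: ys) 0 j.+1 = rem2 ys j j.
Proof.
rewrite /rem2 nth_filter_iota_cons /=; congr map.
by apply: eq_filter => k; rewrite /= eqSS andbb.
Qed.

Lemma rem2_consSS y ys i j : rem2 (y :: ys) i.+1 j.+1 = y :: rem2 ys i j.
Proof. by rewrite /rem2 nth_filter_iota_cons. Qed.

End Rem2.

Lemma pure_cons (K : fieldType) (V : lmodType K) (T : algType K) (io : V -> T)
  y ys : pure io (y :: ys) = io y * pure io ys.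
Proof. by rewrite /pure big_cons. Qed.

Section Contraction.
Variables (K : fieldType) (V : lmodType K) (T : algType K) (io : V -> T).
Variables (F : V -> V -> K) (a : T -> T) (ix : V -> T -> T).
Hypotheses (tens : is_tensor_algebra io).
Hypotheses (Ha : is_a1F io F a) (Hi : is_iF io F ix).

Let lin_a : lin a. Proof. by case: Ha. Qed.
Let lin_ix x : lin (ix x). Proof. by case: (Hi x). Qed.

Lemma lin_iter n : lin (iter n a).
Proof. by elim: n => [|n IH] k u v //=; rewrite IH lin_a. Qed.

Lemma ix1 x : ix x 1 = 0. Proof. by case: (Hi x). Qed.

Lemma ix_mul_io x y u : ix x (io y * u) = F x y *: u - io y * ix x u.
Proof. by case: (Hi x). Qed.

(* [rem2 ys j j] is the word [ys] with its j-th letter deleted. *)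
Lemma ix_pure x ys : ix x (pure io ys) =
  \sum_(j < size ys) ((-1) ^+ j * F x (nth 0 ys j)) *: pure io (rem2 ys j j).
Proof.
elim: ys => [|y ys IH]; first by rewrite /pure big_nil big_ord0 ix1.
rewrite pure_cons ix_mul_io IH big_ord_recl /= expr0 mul1r rem2_cons00.
congr (_ + _).
rewrite mulr_sumr -sumrN; apply: eq_bigr => j _.
by rewrite rem2_consSS pure_cons exprS mulN1r mulNr scaleNr -scalerAr add0n.
Qed.

(* Pairs (0, j) contract the first letter x and give ix x; the other pairs
   leave x in front. *)
Lemma a_pure_cons x ys :
  a (pure io (x :: ys)) = io x * a (pure io ys) + ix x (pure io ys).
Proof.
have [_ a_pure] := Ha.
rewrite !a_pure ix_pure /= big_ord_recl big_ord0 add0r mulr_sumr addrC.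
rewrite -big_split /=.
apply: eq_bigr => j _; rewrite /bump /= add1n big_ord_recl /= rem2_cons0S !add0n.
congr (_ + _); first by rewrite addn1 !exprS !mulN1r opprK.
rewrite mulr_sumr; apply: eq_bigr => i _; rewrite /bump /= add1n.
rewrite rem2_consSS pure_cons -scalerAr add0n !addSn !addnS !addSn.
by rewrite !exprS !mulN1r !opprK.
Qed.

Lemma a1 : a 1 = 0.
Proof.
by have [_ a_pure] := Ha; have := a_pure [::]; rewrite /pure big_nil big_ord0.
Qed.

Lemma a_mul_io x u : a (io x * u) = io x * a u + ix x u.
Proof.
apply: (lin_ext (f := fun u => a (io x * u))
                (g := fun u => io x * a u + ix x u) tens) => //.
- by move=> k v w; rewrite mulrDr -scalerAr lin_a.
- by move=> k v w; rewrite lin_a lin_ix mulrDr -scalerAr scalerDr addrACA.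
- by move=> ws; rewrite -pure_cons a_pure_cons.
Qed.

Lemma ix_anticomm x y u : ix x (ix y u) = - ix y (ix x u).
Proof.
apply: (lin_ext (f := fun u => ix x (ix y u))
                (g := fun u => - ix y (ix x u)) tens) => //.
- by move=> k v w; rewrite !lin_ix.
- by move=> k v w; rewrite !lin_ix opprD scalerN.
elim=> [|z ws IH].
  by rewrite /pure big_nil !ix1 (lin0 (lin_ix x)) (lin0 (lin_ix y)) oppr0.
rewrite pure_cons !ix_mul_io !(linB (lin_ix _)) !(linZ (lin_ix _)) !ix_mul_io IH.
by rewrite mulrN !opprB addrA.
Qed.

Lemma a_ix x u : a (ix x u) = ix x (a u).
Proof.
apply: (lin_ext (f := fun u => a (ix x u))
                (g := fun u => ix x (a u)) tens) => //.
- by move=> k v w; rewrite lin_ix lin_a.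
- by move=> k v w; rewrite lin_a lin_ix.
elim=> [|z ws IH].
  by rewrite /pure big_nil ix1 a1 (lin0 lin_a) (lin0 (lin_ix x)).
rewrite pure_cons ix_mul_io (linB lin_a) (linZ lin_a) !a_mul_io (linD (lin_ix x)).
by rewrite ix_mul_io IH ix_anticomm opprB addrCA addrC.
Qed.

Lemma iter_a_mul_io n x u : iter n.+1 a (io x * u) =
  io x * iter n.+1 a u + n.+1%:R *: ix x (iter n a u).
Proof.
elim: n => [|n IH]; first by rewrite /= a_mul_io scale1r.
rewrite iterS IH (linD lin_a) (linZ lin_a) a_mul_io a_ix -addrA; congr (_ + _).
by rewrite [in RHS]mulrS scalerDl scale1r.
Qed.

Lemma iter_a_pure ws n : (size ws < n)%N -> iter n a (pure io ws) = 0.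
Proof.
elim: ws n => [|x ws IH] [|n] // lt_ws_n.
  by rewrite iterSr /pure big_nil a1 (lin0 (lin_iter n)).
rewrite pure_cons iter_a_mul_io !IH ?(ltnW lt_ws_n) //.
by rewrite mulr0 (lin0 (lin_ix x)) scaler0 addr0.
Qed.

Lemma a_nilpotent u : exists N, forall n, (N <= n)%N -> iter n a u = 0.
Proof.
move: u; apply: (tensor_ind tens) => [ws|k u v [Nu nil_u] [Nv nil_v]].
  by exists (size ws).+1 => n; apply: iter_a_pure.
exists (maxn Nu Nv) => n; rewrite geq_max => /andP[le_Nu le_Nv].
by rewrite lin_iter nil_u // nil_v // scaler0 addr0.
Qed.

Definition exp_series u N := \sum_(n < N) (n`!%:R)^-1 *: iter n a u.

Lemma lin_exp_series N : lin (exp_series ^~ N).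
Proof.
move=> k u v; rewrite /exp_series scaler_sumr -big_split; apply: eq_bigr => n _.
by rewrite lin_iter scalerDr !scalerA mulrC.
Qed.

Lemma exp_series_stable u N M : (forall n, (N <= n)%N -> iter n a u = 0) ->
  (N <= M)%N -> exp_series u M = exp_series u N.
Proof.
move=> nil_u; elim: M => [|M IH]; first by rewrite leqn0 => /eqP ->.
rewrite leq_eqVlt => /orP[/eqP -> //|]; rewrite ltnS => le_NM.
rewrite [LHS]/exp_series big_ord_recr /= nil_u // scaler0 addr0.
by rewrite -/(exp_series u M) IH.
Qed.

Hypothesis char0 : [pchar K] =i pred0.

Lemma exp_series_mul_io x u N : exp_series (io x * u) N.+1 =
  io x * exp_series u N.+1 + ix x (exp_series u N).
Proof.
rewrite /exp_series !big_ord_recl /= mulrDr -addrA; congr (_ + _).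
  by rewrite -scalerAr.
rewrite (lin_sum (lin_ix x)) mulr_sumr -big_split; apply: eq_bigr => n _ /=.
rewrite /bump /= add1n add0n -iterS iter_a_mul_io scalerDr scalerA -scalerAr.
rewrite (linZ (lin_ix x)); congr (_ + _).
have n1_neq0 : n.+1%:R != 0 :> K by move/pcharf0P: char0 => ->.
by rewrite factS natrM invfM mulrAC mulVf // mul1r.
Qed.

Variable L : T -> T -> T.
Hypothesis HL : is_LambdaF io ix L.

Lemma Lambda_pure ws N : (size ws < N)%N ->
  L (pure io ws) 1 = exp_series (pure io ws) N.
Proof.
have [_ _ L1 LM L_io] := HL.
elim: ws N => [|x ws IH] [|N] //= lt_ws_N.
  rewrite /pure big_nil L1 /exp_series big_ord_recl /= invr1 scale1r.
  rewrite big1 ?addr0 //.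
  by move=> n _; rewrite -iterS iterSr a1 (lin0 (lin_iter _)) scaler0.
rewrite pure_cons LM L_io exp_series_mul_io -(IH N) //.
by rewrite -(IH N.+1) ?(ltnW lt_ws_N).
Qed.

Lemma Lambda_exp_series u :
  exists N0, forall N, (N0 <= N)%N -> L u 1 = exp_series u N.
Proof.
have [_ L_lin _ _ _] := HL.
move: u; apply: (tensor_ind tens) => [ws|k u v [Nu Lu] [Nv Lv]].
  by exists (size ws).+1 => N; apply: Lambda_pure.
exists (maxn Nu Nv) => N; rewrite geq_max => /andP[le_Nu le_Nv].
by rewrite L_lin lin_exp_series (Lu N) // (Lv N).
Qed.

End Contraction.

Theorem mainTheorem7 (K : fieldType) (V : lmodType K) (T : algType K)
    (iota : V -> T) (F : V -> V -> K) (a : T -> T) (ix : V -> T -> T)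
    (L : T -> T -> T) :
  [pchar K] =i pred0 ->
  is_tensor_algebra iota ->
  bilinear_form F ->
  is_a1F iota F a -> is_iF iota F ix -> is_LambdaF iota ix L ->
  forall u : T,
    (exists N : nat, forall n, (N <= n)%N -> iter n a u = 0) /\
    (forall N : nat, (forall n, (N <= n)%N -> iter n a u = 0) ->
       L u 1 = \sum_(n < N) (n`!%:R)^-1 *: iter n a u).
Proof.
move=> char0 tens _ Ha Hi HL u; split; first exact: a_nilpotent tens Ha Hi u.
move=> N nil_u; have [N0 L_exp] := Lambda_exp_series tens Ha Hi char0 HL u.
rewrite (L_exp (maxn N N0)) ?leq_maxr //.
exact: exp_series_stable nil_u (leq_maxl _ _).
Qed.
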